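(* Let $m\ge 2$ and let $x=(x_1,\dots,x_m)$ be a sequence of positive integers in which at most one $x_i$ equals $1$. Then $|\textsf{L-NCN}(x)|=\left(\sum_{i=1}^m x_i-1\right)_{m-2}$.
   Context: $(a)_b=a(a-1)\cdots(a-b+1)$ denotes the falling factorial (with $(a)_0=1$). For a sequence $x=(x_1,\dots,x_t)$ of positive integers with sum $N$, $\textsf{L-NC}(x)$ is the set of words $w_1\cdots w_N$ over $[t]$ with exactly $x_i$ occurrences of each letter $i$ and no indices $a<b<c<d$, letters $i\neq j$ with $w_a=w_c=i$, $w_b=w_d=j$ (labeled noncrossing partitions of type $x$). $\textsf{L-NCN}(x)$ is the set of equivalence classes of elements of $\textsf{L-NC}(x)$ under cyclic rotation of words (labeled noncrossing necklaces of type $x$). *)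

From mathcomp Require Import all_boot.
Set Implicit Arguments. Unset Strict Implicit. Unset Printing Implicit Defensive.

Definition lncn_len m (x : 'I_m -> nat) : nat := \sum_(i < m) x i.

Definition noncrossing m N (w : N.-tuple 'I_m) : bool :=
  [forall a : 'I_N, forall b : 'I_N, forall c : 'I_N, forall d : 'I_N,
     ~~ [&& (a < b)%N, (b < c)%N, (c < d)%N,
            tnth w a == tnth w c, tnth w b == tnth w d & tnth w a != tnth w b]].

Definition LNC m (x : 'I_m -> nat) : {set (lncn_len x).-tuple 'I_m} :=
  [set w : (lncn_len x).-tuple 'I_m |
     [forall i : 'I_m, count_mem i w == x i] && noncrossing w].

Definition rot_equiv m N (w w' : N.-tuple 'I_m) : bool :=
  [exists k : 'I_N.+1, val w' == rot k (val w)].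

Definition LNCN m (x : 'I_m -> nat) : {set {set (lncn_len x).-tuple 'I_m}} :=
  [set [set w' in LNC x | rot_equiv w w'] | w in LNC x].

From mathcomp Require Import all_boot zify.
Set Implicit Arguments. Unset Strict Implicit. Unset Printing Implicit Defensive.

(* Words are built from right to left.  Prepending a letter a to a suffix s is
   admissible when a is not yet exhausted in s and, if a already occurs in s,
   every letter before its first occurrence in s is complete (all its x_e
   occurrences are placed).  Words all of whose suffixes are admissible are
   exactly the noncrossing ones ([admissible_noncrossing], [noncrossing_admissible]).

   The number of completions of an admissible suffix depends only on the number
   n of unused letters, their total multiplicity M and the number R of missing
   occurrences of used letters: it is (R+1)(R+M)_(n-1) for n > 0 and 1 for n = 0
   ([completions_formula]); from the empty suffix this gives |L-NC(x)| = N^_(m-1).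

   Noncrossing words are closed under rotation, and a noncrossing word using two
   distinct letters has no nontrivial rotational symmetry, so every rotation
   class has exactly N elements; hence |L-NCN(x)| = N^_(m-1) / N = (N-1)_(m-2). *)

Section Completions.
Variables (m : nat) (x : 'I_m -> nat) (x0 : 'I_m).
Hypothesis x_pos : forall i, 0 < x i.

Definition admissible_cons (a : 'I_m) (s : seq 'I_m) : bool :=
  (count_mem a s < x a) &&
  ((a \in s) ==> all (fun e => count_mem e s == x e) (take (index a s) s)).

Fixpoint admissible (s : seq 'I_m) : bool :=
  if s is a :: s' then admissible s' && admissible_cons a s' else true.

Definition complete (s : seq 'I_m) : bool :=
  admissible s && [forall e, count_mem e s == x e].

Fixpoint completions (L : nat) (s : seq 'I_m) : nat :=
  if L is L'.+1 then \sum_(a : 'I_m) completions L' (a :: s) else complete s.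

Lemma completionsE L s :
  completions L s = \sum_(t : L.-tuple 'I_m) complete (rev t ++ s).
Proof.
elim: L s => [|L IH] s /=.
  by rewrite (big_pred1 [tuple]) // => t; rewrite /= [t]tuple0; apply/esym/eqP.
rewrite (eq_bigr (fun a => \sum_(t : L.-tuple 'I_m) complete (rev t ++ a :: s)));
  last by move=> a _; rewrite IH.
rewrite pair_big /=.
rewrite (reindex (fun p : 'I_m * L.-tuple 'I_m => [tuple of p.1 :: p.2])) /=.
  by apply: eq_bigr => -[a t] _ /=; rewrite rev_cons cat_rcons.
exists (fun t : L.+1.-tuple 'I_m => (thead t, [tuple of behead t])).
  by move=> [a t] _ /=; rewrite theadE; congr pair; apply: val_inj.
by move=> t _ /=; rewrite [RHS]tuple_eta.
Qed.

Lemma admissible_suffix t u : admissible (t ++ u) -> admissible u.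
Proof. by elim: t => //= a t IH /andP[/IH]. Qed.

Lemma completions_inadmissible L s : ~~ admissible s -> completions L s = 0.
Proof.
move=> ns; rewrite completionsE big1 // => t _.
by apply/eqP; rewrite eqb0; apply: contra ns => /andP[/admissible_suffix].
Qed.

Lemma admissible_count_le s : admissible s -> forall e, count_mem e s <= x e.
Proof.
elim: s => [|a s IH] //= /andP[/IH le_s /andP[lt_a _]] e.
by case: (eqVneq a e) => [<-|_]; rewrite ?add1n ?add0n.
Qed.

Lemma nth_before_index (a : 'I_m) s p : p < index a s -> nth x0 s p != a.
Proof. by move=> H; have := before_find x0 H; rewrite /= eq_sym => ->. Qed.

Lemma index_le_nth (a : 'I_m) s p : nth x0 s p = a -> index a s <= p.
Proof. by move=> E; rewrite leqNgt; apply/negP => /nth_before_index; rewrite E eqxx. Qed.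

Lemma size_take_index (a : 'I_m) s p : p < index a s -> p < size (take (index a s) s).
Proof. by move=> H; rewrite size_take; case: ifP => // _; apply: leq_trans H (index_size _ _). Qed.

Lemma all_take_indexP (a : 'I_m) s (P : pred 'I_m) :
  reflect (forall p, p < index a s -> P (nth x0 s p)) (all P (take (index a s) s)).
Proof.
apply: (iffP (all_nthP x0)) => H p p_lt.
  by have := H p (size_take_index p_lt); rewrite nth_take.
have p_idx : p < index a s.
  by apply: leq_trans p_lt _; rewrite size_take; case: ifP => // /negbT; rewrite -leqNgt.
by rewrite nth_take //; apply: H.
Qed.

Definition nc_seq (s : seq 'I_m) := forall a b c d,
  a < b -> b < c -> c < d -> d < size s ->
  nth x0 s a = nth x0 s c -> nth x0 s b = nth x0 s d -> nth x0 s a = nth x0 s b.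

(* A letter c nested strictly inside an arc b..d of another letter is complete:
   its remaining occurrences could not be placed without crossing. *)
Definition nested_complete (s : seq 'I_m) := forall b c d,
  b < c -> c < d -> d < size s ->
  nth x0 s b = nth x0 s d -> nth x0 s b <> nth x0 s c ->
  x (nth x0 s c) <= count_mem (nth x0 s c) s.

Lemma admissible_noncrossing s : admissible s -> nc_seq s /\ nested_complete s.
Proof.
elim: s => [|a s IH] /=; first by split => [a b c d _ _ _ //|b c d _ _ //].
case/andP=> /IH [nc nb] /andP[lt_a before_a]; split.
- move=> [|a'] [|b] [|c] [|d] //= ab bc cd ds E1 E2; last exact: (nc a' b c d).
  case: (eqVneq a (nth x0 s b)) => // ne.
  have ne_bc : nth x0 s b <> nth x0 s c by move=> h; move: ne; rewrite E1 -h eqxx.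
  by have := nb b c d bc cd ds E2 ne_bc; rewrite -E1 leqNgt lt_a.
- move=> [|b] [|c] [|d] //= bc cd ds E ne; last first.
    by apply: leq_trans (nb b c d bc cd ds E ne) _; rewrite leq_addl.
  have a_in : a \in s by rewrite E mem_nth.
  have ne' : nth x0 s c != a by apply/eqP => h; apply: ne; rewrite h.
  rewrite /= eq_sym (negbTE ne') add0n.
  have [c_lt|idx_le] := ltnP c (index a s).
    by move/implyP: before_a => /(_ a_in) /all_take_indexP /(_ c c_lt) /eqP ->.
  have idx_lt : index a s < c.
    rewrite ltn_neqAle idx_le andbT; apply/eqP => h.
    by move: ne'; rewrite -h nth_index // eqxx.
  by have := nb _ c d idx_lt cd ds; rewrite nth_index //; apply.
Qed.

Lemma noncrossing_admissible s : (forall e, count_mem e s <= x e) ->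
  nc_seq s -> nested_complete s -> admissible s.
Proof.
elim: s => [|a s IH] //= le_x nc nb.
have le_x' e : count_mem e s <= x e by apply: leq_trans (le_x e); rewrite /= leq_addl.
have nc' : nc_seq s by move=> a' b c d ab bc cd ds; apply: (nc a'.+1 b.+1 c.+1 d.+1).
have nb' : nested_complete s.
  move=> b c d bc cd ds E ne; have := nb b.+1 c.+1 d.+1 bc cd ds E ne; rewrite /=.
  case: eqVneq => [ea|_] //.
  have := nc 0 b.+1 c.+1 d.+1 (ltn0Sn _) bc cd ds; rewrite /= -ea.
  by move=> /(_ erefl E) h; case: ne; rewrite -h ea.
rewrite IH //=; apply/andP; split; first by have := le_x a; rewrite /= eqxx add1n.
apply/implyP => a_in; apply/all_take_indexP => p p_lt.
have ne := nth_before_index p_lt.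
have idx_lt : index a s < size s by rewrite index_mem.
have := nb 0 p.+1 (index a s).+1 (ltn0Sn _) p_lt idx_lt; rewrite /= nth_index //.
have ne' : a <> nth x0 s p by move=> h; rewrite h eqxx in ne.
move=> /(_ erefl ne').
by rewrite eq_sym (negbTE ne) add0n => h; rewrite eqn_leq h le_x'.
Qed.

Definition n_unused (s : seq 'I_m) := #|[pred e | e \notin s]|.
Definition mass_unused (s : seq 'I_m) := \sum_(e | e \notin s) x e.
Definition missing_used (s : seq 'I_m) := \sum_(e | e \in s) (x e - count_mem e s).

Lemma stats_cons_fresh (a : 'I_m) s : a \notin s ->
  [/\ n_unused s = (n_unused (a :: s)).+1,
      mass_unused s = mass_unused (a :: s) + x a &
      missing_used (a :: s) = missing_used s + (x a).-1].
Proof.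
move=> a_new; split.
- rewrite /n_unused (cardD1 a) inE a_new add1n; congr _.+1; apply: eq_card => e.
  by rewrite !inE negb_or.
- rewrite /mass_unused (bigD1 a) //= addnC; congr (_ + _); apply: eq_bigl => e.
  by rewrite in_cons negb_or andbC.
- rewrite /missing_used (bigD1 a) ?mem_head //= eqxx (count_memPn a_new) subn1 addnC.
  congr (_ + _); rewrite [RHS](eq_bigl (fun e => (e \in a :: s) && (e != a))).
    by apply: eq_bigr => e /andP[_ ea] /=; rewrite eq_sym (negbTE ea).
  move=> e; rewrite in_cons; case: eqVneq => [->|] //=; first by rewrite (negbTE a_new).
  by rewrite andbT.
Qed.

Lemma stats_cons_used (a : 'I_m) s : a \in s -> count_mem a s < x a ->
  [/\ n_unused (a :: s) = n_unused s, mass_unused (a :: s) = mass_unused s &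
      (missing_used (a :: s)).+1 = missing_used s].
Proof.
move=> a_in lt_a; have memE e : (e \in a :: s) = (e \in s).
  by rewrite in_cons; case: eqVneq => // ->.
split.
- by apply: eq_card => e; rewrite !inE -in_cons memE.
- by apply: eq_bigl => e; rewrite memE.
- rewrite /missing_used (bigD1 a) ?mem_head // [RHS](bigD1 a) //= eqxx add1n.
  rewrite -addSn subnSK //; congr (_ + _); apply: eq_big => e; first by rewrite memE.
  by case/andP=> _ ea; rewrite eq_sym (negbTE ea).
Qed.

Lemma x_le_mass_unused (a : 'I_m) s : a \notin s -> x a <= mass_unused s.
Proof. by move=> a_new; rewrite /mass_unused (bigD1 a) //= leq_addr. Qed.

Lemma n_unused_le_mass s : n_unused s <= mass_unused s.
Proof. by rewrite /n_unused -sum1_card; apply: leq_sum => e _; apply: x_pos. Qed.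

Lemma n_unused0 s : n_unused s = 0 -> forall e, e \in s.
Proof. by move=> /card0_eq h e; apply/negPn/negP => e_new; have := h e; rewrite !inE e_new. Qed.

Definition open_in (s : seq 'I_m) : pred 'I_m := fun e => count_mem e s < x e.

Lemma missing_used_gt0 s : (0 < missing_used s) = has (open_in s) s.
Proof.
apply/idP/hasP => [|[e e_in e_open]].
  rewrite lt0n sum_nat_eq0 => /forall_inPn [e e_in]; rewrite subn_eq0 -ltnNge.
  by exists e.
by rewrite /missing_used (bigD1 e) //= (leq_trans _ (leq_addr _ _)) // subn_gt0.
Qed.

Lemma admissible_cons_used (a : 'I_m) s : admissible s -> a \in s ->
  admissible (a :: s) = has (open_in s) s && (a == nth x0 s (find (open_in s) s)).
Proof.
move=> adm_s a_in /=; rewrite adm_s /= /admissible_cons a_in /=.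
set f := find (open_in s) s.
apply/andP/andP => [[a_open /all_take_indexP closed_before]|[has_open /eqP ->]].
  have has_open : has (open_in s) s by apply/hasP; exists a.
  split => //; suff -> : f = index a s by rewrite nth_index.
  apply/eqP; rewrite eqn_leq; apply/andP; split; rewrite leqNgt; apply/negP => H.
    by have := before_find x0 H; rewrite nth_index // /open_in a_open.
  by have := nth_find x0 has_open; rewrite -/f /open_in (eqP (closed_before _ H)) ltnn.
have f_lt : f < size s by rewrite -has_find.
have idx_f : index (nth x0 s f) s = f.
  apply/eqP; rewrite eqn_leq index_le_nth //= leqNgt; apply/negP => H.
  by have := before_find x0 H; rewrite nth_index ?mem_nth // /f nth_find.
split; first by have := nth_find x0 has_open.
apply/all_take_indexP => p; rewrite idx_f => p_lt.
have := before_find x0 p_lt; rewrite /open_in => /negbT; rewrite -leqNgt => h.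
by rewrite eqn_leq h admissible_count_le.
Qed.

Definition completion_count n M R := if n is n'.+1 then R.+1 * (R + M) ^_ n' else 1.

Local Notation closed_form s := (completion_count (n_unused s) (mass_unused s) (missing_used s)).

Definition formula_at L := forall s, admissible s ->
  L = mass_unused s + missing_used s -> completions L s = closed_form s.

Lemma formula_at0 : formula_at 0.
Proof.
move=> s adm_s /esym/eqP; rewrite addn_eq0 => /andP[/eqP M0 /eqP R0] /=.
have all_used e : e \in s.
  apply/negPn/negP => /x_le_mass_unused; rewrite M0 leqn0 => /eqP xe0.
  by have := x_pos e; rewrite xe0.
have -> : n_unused s = 0 by apply: eq_card0 => e; rewrite !inE all_used.
rewrite /complete adm_s; suff -> : [forall e, count_mem e s == x e] by [].
apply/forallP => e; move/eqP: R0; rewrite sum_nat_eq0 => /forall_inP /(_ e (all_used e)).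
by rewrite subn_eq0 eqn_leq admissible_count_le // => ->.
Qed.

Section Step.
Variables (L : nat) (s : seq 'I_m).
Hypotheses (IH : formula_at L) (adm_s : admissible s).
Hypothesis length_s : L.+1 = mass_unused s + missing_used s.

Lemma sum_completions_used :
  \sum_(a | a \in s) completions L (a :: s) =
  if has (open_in s) s then completion_count (n_unused s) (mass_unused s) (missing_used s).-1
  else 0.
Proof.
rewrite (eq_bigr (fun a => admissible (a :: s) *
           completion_count (n_unused s) (mass_unused s) (missing_used s).-1)); last first.
  move=> a a_in; case adm: (admissible (a :: s)); last by rewrite completions_inadmissible ?adm.
  move: (adm) => /= /andP[_ /andP[a_open _]].
  have [En EM ER] := stats_cons_used a_in a_open.
  rewrite (IH adm); last by move: length_s; rewrite EM -ER; lia.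
  by rewrite En EM -ER mul1n.
case: (boolP (has (open_in s) s)) => has_open; last first.
  by rewrite big1 // => a a_in; rewrite admissible_cons_used // (negbTE has_open).
set first_open := nth x0 s (find (open_in s) s).
have f_in : first_open \in s by rewrite mem_nth // -has_find.
rewrite (bigD1 first_open) // admissible_cons_used // has_open eqxx mul1n.
rewrite big1 => [|a /andP[a_in ne]]; first exact: addn0.
by rewrite admissible_cons_used // (negbTE ne) andbF.
Qed.

Lemma sum_completions_fresh :
  \sum_(a | a \notin s) completions L (a :: s) =
  \sum_(a | a \notin s)
    completion_count (n_unused s).-1 (mass_unused s - x a) (missing_used s + (x a).-1).
Proof.
apply: eq_bigr => a a_new; have [En EM ER] := stats_cons_fresh a_new.
have adm : admissible (a :: s).
  by rewrite /= adm_s /admissible_cons (negbTE a_new) (count_memPn a_new) x_pos.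
rewrite (IH adm); first by rewrite ER En EM addnK.
(* Naming the atoms identifies their copies that differ only in implicit types. *)
by move: length_s; rewrite EM ER; have := x_pos a; set xa := x a; set M' := mass_unused _; lia.
Qed.

Lemma completion_count_recursion :
  (if has (open_in s) s then completion_count (n_unused s) (mass_unused s) (missing_used s).-1
   else 0) +
  \sum_(a | a \notin s)
    completion_count (n_unused s).-1 (mass_unused s - x a) (missing_used s + (x a).-1)
  = closed_form s.
Proof.
move: length_s (missing_used_gt0 s) => len R_pos.
set R := missing_used s in len R_pos *; set M := mass_unused s in len *.
case En: (n_unused s) => [|[|n]].
- have M0 : M = 0 by rewrite /M /mass_unused big_pred0 // => a; rewrite (n_unused0 En a).
  rewrite big_pred0 => [|a]; last by rewrite (n_unused0 En a).
  have : 0 < R by move: len; rewrite M0; lia.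
  by rewrite R_pos => ->.
- rewrite (eq_bigr (fun _ => 1)) // sum1_card -/(n_unused s) En /=.
  by case: (boolP (has _ _)) R_pos => has_open /= R_gt; rewrite ?ffactn0; lia.
- set P := (R + M).-1 ^_ n.
  rewrite (eq_bigr (fun a => (R + x a) * P)); last first.
    move=> a a_new /=; have := x_le_mass_unused a_new; have := x_pos a; rewrite -/M => h1 h2.
    have -> : (R + (x a).-1).+1 = R + x a by lia.
    by have -> : R + (x a).-1 + (M - x a) = (R + M).-1 by lia.
  (* The n+2 fresh letters contribute ((n+2) R + M) P, the first open letter R (R+M-n-1) P. *)
  rewrite -big_distrl big_split /= sum_nat_const -/(n_unused s) En.
  have nM : n.+2 <= M by rewrite -En n_unused_le_mass.
  have -> : (if has (open_in s) s then completion_count n.+2 M R.-1 else 0)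
            = R * (P * ((R + M).-1 - n)).
    case: (boolP (has _ _)) R_pos => has_open R_gt /=; last by move: R_gt; case: (R).
    by move: R_gt; rewrite /P; case: (R) => // r _ /=; rewrite ffactnSr.
  rewrite ffactnS -/(mass_unused s).
  have -> : (R + M).-1 - n = R + M - n.+1 by lia.
  nia.
Qed.

End Step.

Lemma formula_step L : formula_at L -> formula_at L.+1.
Proof.
move=> IH s adm_s len /=.
rewrite (bigID (fun a => a \in s)) /= sum_completions_used // sum_completions_fresh //.
exact: completion_count_recursion len.
Qed.

Lemma completions_formula L : formula_at L.
Proof. by elim: L => [|L IH]; [exact: formula_at0 | exact: formula_step]. Qed.

End Completions.

Section Rotation.
Variables (m : nat) (x0 : 'I_m).

Lemma nc_seq_rot1 (s : seq 'I_m) : nc_seq x0 s -> nc_seq x0 (rot 1 s).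
Proof.
case: s => [|a s] nc //; rewrite rot1_cons => a' b c d ab bc cd; rewrite size_rcons => ds.
have [al bl cl] : [/\ a' < size s, b < size s & c < size s] by split; lia.
rewrite !nth_rcons al bl cl.
case: ifP => [dl|/negbT d_ge]; first exact: (nc a'.+1 b.+1 c.+1 d.+1).
case: eqP => [_|]; last by lia.
move=> E1 E2.
have := nc 0 a'.+1 b.+1 c.+1 (ltn0Sn _) ab bc cl (esym E2) E1 => /= h.
by rewrite -h E2.
Qed.

Lemma nc_seq_rot k (s : seq 'I_m) : nc_seq x0 s -> nc_seq x0 (rot k s).
Proof.
move=> nc; elim: k => [|k IH]; first by rewrite rot0.
have [k_lt|k_ge] := ltnP k (size s); first by rewrite rotS //; apply: nc_seq_rot1.
by rewrite rot_oversize //; apply: leqW.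
Qed.

Lemma nth_rot_fixed e (s : seq 'I_m) p : rot e s = s -> p + e < size s ->
  nth x0 s p = nth x0 s (p + e).
Proof.
move=> E pe; rewrite -[in LHS]E /rot nth_cat size_drop.
have -> : p < size s - e by lia.
by rewrite nth_drop addnC.
Qed.

Lemma rot_fixed_half k (s : seq 'I_m) : 0 < k < size s -> rot k s = s ->
  exists2 e, 0 < e /\ 2 * e <= size s & rot e s = s.
Proof.
case/andP=> k_gt0 k_lt E; have [small|big] := leqP (2 * k) (size s).
  by exists k.
exists (size s - k); first by split; lia.
have k_le := ltnW k_lt.
by rewrite -{2}E -rotD subnK ?rot_size.

Qed.

Lemma index_lt_shift e (s : seq 'I_m) (l : 'I_m) : 0 < e -> rot e s = s -> l \in s ->
  index l s < e.
Proof.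
move=> e_gt0 E l_in; rewrite ltnNge; apply/negP => e_le.
have idx_lt : index l s < size s by rewrite index_mem.
have := nth_rot_fixed (p := index l s - e) E; rewrite subnK // => /(_ idx_lt).
by rewrite nth_index // => /index_le_nth; lia.
Qed.

(* A noncrossing word with a nontrivial rotational symmetry uses a single letter:
   two letters i, j first occurring at positions p < q would reappear at p+e, q+e
   and cross. *)
Lemma rot_fixed_nc_single_letter k (s : seq 'I_m) (i j : 'I_m) :
  nc_seq x0 s -> 0 < k < size s -> rot k s = s -> i \in s -> j \in s -> i = j.
Proof.
move=> nc k_range /(rot_fixed_half k_range) [e [e_gt0 e_half] E] i_in j_in.
have first_letter (a b : 'I_m) : a \in s -> b \in s -> index a s < index b s -> a = b.
  move=> a_in b_in ab.
  have [ia ib] := (index_lt_shift e_gt0 E a_in, index_lt_shift e_gt0 E b_in).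
  have [la lb] : index a s + e < size s /\ index b s + e < size s by split; lia.
  have := nc (index a s) (index b s) (index a s + e) (index b s + e) ab.
  by rewrite -!(nth_rot_fixed E) // !nth_index //; apply => //; lia.
have [ij|ji|ij] := ltngtP (index i s) (index j s).
- exact: first_letter.
- exact: esym (first_letter _ _ j_in i_in ji).
- by rewrite -(nth_index x0 i_in) ij nth_index.
Qed.

End Rotation.

Section Necklaces.
Variables (m : nat) (x : 'I_m -> nat) (x0 : 'I_m).
Hypothesis x_pos : forall i, 0 < x i.
Local Notation N := (lncn_len x).

Lemma N_gt0 : 0 < N.
Proof. by rewrite /lncn_len (bigD1 x0) // (leq_trans (x_pos x0)) ?leq_addr. Qed.

Lemma noncrossing_nc_seq (w : N.-tuple 'I_m) : noncrossing w <-> nc_seq x0 w.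
Proof.
split.
- move=> /forallP nc a b c d ab bc cd; rewrite size_tuple => dN E1 E2.
  have [aN bN cN] : [/\ a < N, b < N & c < N] by split; lia.
  move: (nc (Ordinal aN)) => /forallP /(_ (Ordinal bN)) /forallP /(_ (Ordinal cN)).
  move=> /forallP /(_ (Ordinal dN)).
  by rewrite !(tnth_nth x0) /= ab bc cd E1 E2 !eqxx /= => /negPn /eqP.
- move=> nc; do 4![apply/forallP => ?]; apply/negP.
  case/and5P=> ab bc cd /eqP E1 /andP[/eqP E2]; rewrite !(tnth_nth x0) in E1 E2 *.
  by rewrite (nc _ _ _ _ ab bc cd) ?size_tuple ?eqxx.
Qed.

Lemma mem_LNC (w : N.-tuple 'I_m) : (w \in LNC x) = complete x w.
Proof.
rewrite inE /complete andbC.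
case counts: [forall i, count_mem i w == x i]; rewrite ?andbT ?andbF //.
have count_eq e : count_mem e w = x e by apply/eqP/(forallP counts).
apply/idP/idP => [nc|adm]; last by apply/noncrossing_nc_seq; case: (admissible_noncrossing x0 adm).
apply: noncrossing_admissible => [e||b c d _ _ _ _ _]; rewrite ?count_eq //.
exact/noncrossing_nc_seq.
Qed.

Lemma card_LNC : #|LNC x| = N ^_ m.-1.
Proof.
have -> : #|LNC x| = \sum_(t : N.-tuple 'I_m) complete x t.
  by rewrite -sum1_card big_mkcond /=; apply: eq_bigr => t _; rewrite mem_LNC; case: complete.
rewrite (reindex_inj (h := fun t : N.-tuple 'I_m => [tuple of rev t])) /=; last first.
  by move=> t1 t2 /(congr1 val) /= /(congr1 rev); rewrite !revK => /val_inj.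
transitivity (completions x N [::]).
  by rewrite completionsE; apply: eq_bigr => t _; rewrite cats0.
have M0 : mass_unused x [::] = N by apply: eq_bigl => e; rewrite in_nil.
have R0 : missing_used x [::] = 0 by rewrite /missing_used big_pred0 // => e; rewrite in_nil.
have n0 : n_unused ([::] : seq 'I_m) = m.
  by rewrite /n_unused -[RHS]card_ord; apply: eq_card => e; rewrite !inE.
rewrite (completions_formula x0 x_pos (s := [::])) // ?M0 ?R0 ?addn0 // n0.
have m_gt0 : 0 < m := leq_ltn_trans (leq0n x0) (ltn_ord x0).
by rewrite -[X in completion_count X](prednK m_gt0) /= mul1n.
Qed.

Lemma rot_equivP (w w' : N.-tuple 'I_m) :
  reflect (exists2 k, k <= N & val w' = rot k w) (rot_equiv w w').
Proof.
apply: (iffP existsP) => [[k /eqP E]|[k kN E]]; first by exists k; rewrite // -ltnS.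
by exists (Ordinal (kN : k < N.+1)); apply/eqP.
Qed.

Lemma rot_equiv_sym (a b : N.-tuple 'I_m) : rot_equiv a b -> rot_equiv b a.
Proof.
case/rot_equivP=> k _ E; apply/rot_equivP; exists (N - k); first exact: leq_subr.
by have := rotK k (val a); rewrite /rotr size_rot size_tuple E.
Qed.

Lemma rot_equiv_trans (a b c : N.-tuple 'I_m) :
  rot_equiv a b -> rot_equiv b c -> rot_equiv a c.
Proof.
case/rot_equivP=> k1 _ E1 /rot_equivP [k2 _ E2]; apply/rot_equivP.
exists (rot_add a k1 k2); first by have := leq_rot_add k1 k2 a; rewrite size_tuple.
by rewrite E2 E1 rot_rot_add.
Qed.

Lemma rot_equiv_equivalence : {in LNC x & &, equivalence_rel (@rot_equiv m N)}.
Proof.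
move=> a b c _ _ _; split; first by apply/rot_equivP; exists 0; rewrite ?rot0.
move=> ab; apply/idP/idP; first exact: rot_equiv_trans (rot_equiv_sym ab).
exact: rot_equiv_trans ab.
Qed.

Lemma rot_LNC (w : N.-tuple 'I_m) k : w \in LNC x -> [tuple of rot k w] \in LNC x.
Proof.
rewrite !inE => /andP[counts nc]; apply/andP; split.
  have rot_perm : perm_eq (rot k w) w by rewrite perm_rot.
  by apply/forallP => e /=; rewrite (permP rot_perm) (forallP counts e).
by apply/noncrossing_nc_seq/nc_seq_rot/noncrossing_nc_seq.
Qed.

Lemma rot_class_image (w : N.-tuple 'I_m) : w \in LNC x ->
  [set w' in LNC x | rot_equiv w w'] = [set [tuple of rot k w] | k : 'I_N].
Proof.
move=> w_in; apply/setP => w'; rewrite !inE; apply/andP/imsetP.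
- case=> _ /rot_equivP [k kN E]; have [k_lt|k_ge] := ltnP k N.
    by exists (Ordinal k_lt) => //; apply: val_inj; rewrite /= E.
  exists (Ordinal N_gt0) => //; apply: val_inj; rewrite /= E rot0.
  have -> : k = size w by rewrite size_tuple; lia.
  exact: rot_size.
- case=> k _ ->; split; first by have := rot_LNC k w_in; rewrite inE.
  by apply/rot_equivP; exists k => //; apply: ltnW.
Qed.

Hypothesis m_gt1 : 1 < m.

Lemma rot_LNC_inj (w : N.-tuple 'I_m) i j : w \in LNC x -> i < j < N ->
  rot i w != rot j w.
Proof.
rewrite inE => /andP[/forallP counts nc] /andP[ij jN]; apply/eqP => E.
set u := rot i w.
have u_fixed : rot (j - i) u = u by rewrite /u -rotD ?subnK ?size_tuple 1?ltnW // E.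
have u_all (l : 'I_m) : l \in u.
  by rewrite mem_rot -has_pred1 has_count (eqP (counts l)) x_pos.
have u_nc : nc_seq x0 u by apply/nc_seq_rot/noncrossing_nc_seq.
have shift_range : 0 < j - i < size u by rewrite size_rot size_tuple; apply/andP; split; lia.
have := rot_fixed_nc_single_letter u_nc shift_range u_fixed
          (u_all (Ordinal (ltnW m_gt1))) (u_all (Ordinal m_gt1)).
by move/(congr1 val).
Qed.

Lemma card_rot_class (w : N.-tuple 'I_m) : w \in LNC x ->
  #|[set w' in LNC x | rot_equiv w w']| = N.
Proof.
move=> w_in; rewrite rot_class_image // card_imset ?card_ord //.
have rot_ne (i j : 'I_N) : i < j -> rot i w != rot j w.
  by move=> ij; apply: rot_LNC_inj => //; rewrite ij ltn_ord.
move=> i j /(congr1 val) /= E; apply/val_inj/eqP.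
by case: (ltngtP i j) => // [/rot_ne | /rot_ne]; rewrite E eqxx.
Qed.

End Necklaces.

Lemma ffact_div_base (N k c : nat) : 0 < N -> N ^_ k.+1 = c * N -> c = N.-1 ^_ k.
Proof.
case: N => // N _; rewrite ffactSS [c * _]mulnC => /eqP.
by rewrite eqn_pmul2l // => /eqP.
Qed.

(* The main theorem keeps all its binders explicit. *)
Unset Implicit Arguments.

(* The rotation classes partition L-NC(x) into blocks of size N, so
   N (N-1)^_(m-2) = N^_(m-1) = N |L-NCN(x)|. *)
Theorem mainTheorem3 (m : nat) (x : 'I_m -> nat) :
  (2 <= m)%N ->
  (forall i, (0 < x i)%N) ->
  (#|[set i : 'I_m | x i == 1%N]| <= 1)%N ->
  #|LNCN x| = ((lncn_len x).-1 ^_ (m - 2))%N.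
Proof.
move=> m_gt1 x_pos _.
pose x0 : 'I_m := Ordinal (ltnW m_gt1).
have class_card : {in LNCN x, forall A : {set (lncn_len x).-tuple 'I_m}, #|A| = lncn_len x}.
  by move=> A /imsetP [w w_in ->]; apply: card_rot_class.
have classes := equivalence_partitionP (rot_equiv_equivalence (x := x)).
have := card_uniform_partition class_card classes.
rewrite (card_LNC x0 x_pos) (_ : m.-1 = (m - 2).+1); last by lia.
by apply: ffact_div_base; apply: N_gt0.
Qed.
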